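(* Let $K\ge 2$, let $\boldsymbol{\pi}\in(0,1)^K$ with $\sum_k\pi_k=1$, and let $\mathbf{B}\in(0,1)^{K\times K}$ be symmetric with pairwise distinct rows. Let $p_0\in(0,1)$ and $p_1\in(0,1-p_0)$, and set $\mathbf{B}_0=p_0\mathbf{B}$ and $\mathbf{B}_1=\mathbf{B}_0+p_1\mathbf{B}=(p_0+p_1)\mathbf{B}$. Then $\mathbf{B}\succ\mathbf{B}_1\succ\mathbf{B}_0$, i.e. $\rho_{\mathbf{B}}>\rho_{\mathbf{B}_1}>\rho_{\mathbf{B}_0}$.
   Context: For a symmetric $\mathbf{B}\in(0,1)^{K\times K}$ with $d_+\ge1$ strictly positive and $d_-\ge 0$ strictly negative eigenvalues, let $d=d_++d_-$ and $\mathbf{I}_{d_+d_-}=\mathrm{diag}(\mathbf{I}_{d_+},-\mathbf{I}_{d_-})$. Write $\mathbf{B}=\mathbf{U}\mathbf{S}\mathbf{U}^\top$ where $\mathbf{S}\in\mathbb{R}^{d\times d}$ is the diagonal matrix of nonzero eigenvalues (positive ones first) and $\mathbf{U}\in\mathbb{R}^{K\times d}$ has orthonormal columns, and set $\boldsymbol{\nu}=\mathbf{U}|\mathbf{S}|^{1/2}\in\mathbb{R}^{K\times d}$ with rows $\boldsymbol{\nu}_1,\dots,\boldsymbol{\nu}_K$, so that $\boldsymbol{\nu}_k^\top\mathbf{I}_{d_+d_-}\boldsymbol{\nu}_\ell=\mathbf{B}_{k\ell}$. Given block assignment probabilities $\boldsymbol{\pi}\in(0,1)^K$ summing to one, define $\boldsymbol{\Delta}=\sum_{\ell=1}^K\pi_\ell\boldsymbol{\nu}_\ell\boldsymbol{\nu}_\ell^\top$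 and, for each $k$, $$\boldsymbol{\Sigma}_k=\mathbf{I}_{d_+d_-}\boldsymbol{\Delta}^{-1}\Big[\sum_{\ell=1}^K\pi_\ell\,\mathbf{B}_{k\ell}(1-\mathbf{B}_{k\ell})\,\boldsymbol{\nu}_\ell\boldsymbol{\nu}_\ell^\top\Big]\boldsymbol{\Delta}^{-1}\mathbf{I}_{d_+d_-}.$$ For $t\in(0,1)$ let $\boldsymbol{\Sigma}_{k\ell}(t)=t\boldsymbol{\Sigma}_k+(1-t)\boldsymbol{\Sigma}_\ell$, and define $$C_{k,\ell}(\mathbf{B},\boldsymbol{\pi})=\sup_{t\in(0,1)}\Big[t(1-t)(\boldsymbol{\nu}_k-\boldsymbol{\nu}_\ell)^\top\boldsymbol{\Sigma}_{k\ell}(t)^{-1}(\boldsymbol{\nu}_k-\boldsymbol{\nu}_\ell)\Big],$$ and the (approximate) Chernoff information $\rho_{\mathbf{B}}=\min_{k\neq\ell}C_{k,\ell}(\mathbf{B},\boldsymbol{\pi})$. For two such matrices $\mathbf{B},\mathbf{B}'$ with the same $\boldsymbol{\pi}$, $\mathbf{B}$ is called Chernoff superior to $\mathbf{B}'$, written $\mathbf{B}\succ\mathbf{B}'$, if $\rho_{\mathbf{B}}>\rho_{\mathbf{B}'}$. *)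

From HB Require Import structures.
From mathcomp Require Import all_boot all_order all_algebra.
From mathcomp Require Import classical_sets boolp reals.
Set Implicit Arguments. Unset Strict Implicit. Unset Printing Implicit Defensive.
Import Order.TTheory GRing.Theory Num.Theory.
Local Open Scope ring_scope.
Local Open Scope classical_set_scope.

(* A spectral decomposition B = U S U^T as in the paper: U (K x d) with
   orthonormal columns, S = diag(s) the nonzero eigenvalues, the d_+ >= 1
   positive ones first, then the d_- negative ones. *)
Record sdecomp (R : realType) (K : nat) (B : 'M[R]_K) := SDecomp {
  dp : nat;
  dm : nat;
  dU : 'M[R]_(K, dp + dm);
  ds : 'rV[R]_(dp + dm);
  dp_gt0 : (0 < dp)%N;
  dU_orth : dU^T *m dU = 1%:M;
  ds_pos : forall i : 'I_(dp + dm), (i < dp)%N -> 0 < ds 0 i;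
  ds_neg : forall i : 'I_(dp + dm), (dp <= i)%N -> ds 0 i < 0;
  dB : B = dU *m diag_mx ds *m dU^T }.

Section Chernoff.
Variables (R : realType) (K : nat) (B : 'M[R]_K) (D : sdecomp B).
Variable (pi : 'I_K -> R).

Local Notation d := (dp D + dm D)%N.

Definition Ipm : 'M[R]_d :=
  diag_mx (\row_(i < d) if (i < dp D)%N then 1 else -1).

Definition nu : 'M[R]_(K, d) :=
  dU D *m diag_mx (\row_(i < d) Num.sqrt `|ds D 0 i|).

Definition nuk (k : 'I_K) : 'rV[R]_d := row k nu.

Definition Delta : 'M[R]_d := \sum_(l < K) pi l *: ((nuk l)^T *m nuk l).

Definition Sigma (k : 'I_K) : 'M[R]_d :=
  Ipm *m invmx Delta *m
  (\sum_(l < K) (pi l * B k l * (1 - B k l)) *: ((nuk l)^T *m nuk l))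
  *m invmx Delta *m Ipm.

Definition Sigma_t (k l : 'I_K) (t : R) : 'M[R]_d :=
  t *: Sigma k + (1 - t) *: Sigma l.

Definition chernoff_obj (k l : 'I_K) (t : R) : R :=
  let x := nuk k - nuk l in
  t * (1 - t) * (x *m invmx (Sigma_t k l t) *m x^T) 0 0.

Definition chernoff_C (k l : 'I_K) : R :=
  sup [set chernoff_obj k l t | t in [set t : R | 0 < t < 1]].

Definition rho : R :=
  inf [set x : R | exists k l : 'I_K, k != l /\ x = chernoff_C k l].

End Chernoff.

From HB Require Import structures.
From mathcomp Require Import all_boot all_order all_algebra.
From mathcomp Require Import classical_sets boolp reals.
From mathcomp Require Import ring lra.
Set Implicit Arguments. Unset Strict Implicit. Unset Printing Implicit Defensive.
Import Order.TTheory GRing.Theory Num.Theory.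
Local Open Scope ring_scope.

(* Write u = z nu^T for z in R^d; these u are exactly the vectors of the row
   space of B. The inverse of Sigma_t is congruent to the inverse of a weighted
   Gram matrix of the rows of nu, so completing the square shows that the
   Chernoff objective at t is t (1 - t) times the maximum over such u of the
   concave "dual"
     2 sum_m pi_m (B_km - B_lm) u_m - sum_m pi_m w_m u_m^2,
     w_m = t B_km (1 - B_km) + (1 - t) B_lm (1 - B_lm).
   For the matrix c B the dual equals c (L(u) + c Q(u)) with Q >= 0, while the
   row space does not depend on c > 0. Hence C_kl(c2 B) >= (c2 / c1) C_kl(c1 B)
   whenever 0 < c1 < c2, and as rho is positive for matrices with distinct rows,
   rho_(c1 B) < rho_(c2 B). *)

Lemma trmx11 (R : pzSemiRingType) (a : 'M[R]_1) : a^T = a.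
Proof. by rewrite [a]mx11_scalar tr_scalar_mx. Qed.

Lemma mxBE (R : zmodType) m n (X Y : 'M[R]_(m, n)) i j : (X - Y) i j = X i j - Y i j.
Proof. by rewrite !mxE. Qed.

Lemma mulmx11E (R : pzSemiRingType) (a c : 'M[R]_1) : (a *m c) 0 0 = a 0 0 * c 0 0.
Proof. by rewrite mxE big_ord1. Qed.

Lemma mulmx_trmx_row (R : pzSemiRingType) m n (z : 'rV[R]_m) (M : 'M[R]_(n, m)) l :
  (z *m (row l M)^T) 0 0 = (z *m M^T) 0 l.
Proof. by rewrite !mxE; apply: eq_bigr => i _; rewrite !mxE. Qed.

Lemma mulmx1_invmx (R : comUnitRingType) n (X Y : 'M[R]_n) :
  X *m Y = 1%:M -> invmx X = Y.
Proof.
move=> XY1; have [Xu _] := mulmx1_unit XY1.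
by rewrite -[invmx X]mulmx1 -XY1 mulmxA mulVmx // mul1mx.
Qed.

Lemma psumr_gt0 (R : numDomainType) (I : finType) (F : I -> R) i :
  (forall j, 0 <= F j) -> 0 < F i -> 0 < \sum_j F j.
Proof.
move=> F_ge0 Fi_gt0; rewrite lt0r sumr_ge0 // andbT psumr_neq0 //.
by apply/hasP; exists i; rewrite ?mem_index_enum.
Qed.

Section QuadraticFormInverse.
Variables (R : realFieldType) (n : nat) (M : 'M[R]_n) (a : 'rV[R]_n).
Hypotheses (M_unit : M \in unitmx) (M_sym : M^T = M).

Let trmx_a_invmx : (a *m invmx M)^T = invmx M *m a^T.
Proof. by rewrite trmx_mul trmx_inv M_sym. Qed.

(* Completing the square: the difference is the form of M at z - a M^-1. *)
Lemma quad_inv_ge (z : 'rV[R]_n) :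
  (forall y : 'rV[R]_n, 0 <= (y *m M *m y^T) 0 0) ->
  2 * (a *m z^T) 0 0 - (z *m M *m z^T) 0 0 <= (a *m invmx M *m a^T) 0 0.
Proof.
move=> M_psd; have := M_psd (z - a *m invmx M).
have aMM : a *m invmx M *m M = a by rewrite -mulmxA mulVmx // mulmx1.
rewrite raddfB /= trmx_a_invmx mulmxBl !mulmxBr aMM !mulmxA !mulmxBl.
rewrite -(mulmxA z M (invmx M)) mulmxV // mulmx1.
have -> : z *m a^T = a *m z^T by rewrite -[RHS]trmx11 trmx_mul trmxK.
rewrite !mxE; lra.
Qed.

Lemma quad_inv_attained :
  2 * (a *m (a *m invmx M)^T) 0 0 - (a *m invmx M *m M *m (a *m invmx M)^T) 0 0
  = (a *m invmx M *m a^T) 0 0.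
Proof.
rewrite -[a *m _ *m M]mulmxA mulVmx // mulmx1 trmx_a_invmx mulmxA.
by rewrite mulr2n mulrDl mul1r addrK.
Qed.

End QuadraticFormInverse.

Section ChernoffDual.
Variables (R : realFieldType) (K : nat) (pi : 'I_K -> R).
Hypothesis pi_gt0 : forall m, 0 < pi m.
Implicit Types (A B : 'M[R]_K) (k l m : 'I_K) (t : R) (u : 'rV[R]_K).

Definition var_mix A k l t m :=
  t * (A k m * (1 - A k m)) + (1 - t) * (A l m * (1 - A l m)).

Definition var_min A k l m := Order.min (A k m * (1 - A k m)) (A l m * (1 - A l m)).

Definition chernoff_dual A k l t u :=
  2 * (\sum_m pi m * (A k m - A l m) * u 0 m)
  - \sum_m pi m * var_mix A k l t m * u 0 m ^+ 2.

Definition chernoff_dual_bound A k l :=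
  \sum_m pi m * ((A k m - A l m) ^+ 2 / var_min A k l m).

Lemma chernoff_dualE A k l t u : chernoff_dual A k l t u =
  \sum_m pi m * (2 * (A k m - A l m) * u 0 m - var_mix A k l t m * u 0 m ^+ 2).
Proof. by rewrite /chernoff_dual mulr_sumr -sumrB; apply: eq_bigr => m _; ring. Qed.

Lemma chernoff_dual0 A k l t : chernoff_dual A k l t 0 = 0.
Proof.
by rewrite chernoff_dualE big1 // => m _; rewrite mxE expr0n /= !mulr0 subr0 mulr0.
Qed.

Section Entries01.
Variable A : 'M[R]_K.
Hypothesis A01 : forall i j, 0 < A i j < 1.

Lemma var_min_gt0 k l m : 0 < var_min A k l m.
Proof.
have /andP[a0 a1] := A01 k m; have /andP[b0 b1] := A01 l m.
by rewrite lt_min !mulr_gt0 ?subr_gt0.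
Qed.

Lemma var_min_le_mix k l t m : 0 <= t <= 1 -> var_min A k l m <= var_mix A k l t m.
Proof.
move=> /andP[t0 t1]; rewrite /var_mix.
have hk : var_min A k l m <= A k m * (1 - A k m) by rewrite ge_min lexx.
have hl : var_min A k l m <= A l m * (1 - A l m) by rewrite ge_min lexx orbT.
nra.
Qed.

Lemma var_mix_gt0 k l t m : 0 <= t <= 1 -> 0 < var_mix A k l t m.
Proof. by move=> t01; apply: lt_le_trans (var_min_le_mix _ _ _ t01); apply: var_min_gt0. Qed.

(* Each summand is a concave parabola in [u 0 m] whose curvature is at least
   [pi m * var_min]; its maximum is at most [pi m * gap^2 / var_min]. *)
Lemma chernoff_dual_le_bound k l t u :
  0 <= t <= 1 -> chernoff_dual A k l t u <= chernoff_dual_bound A k l.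
Proof.
move=> t01; rewrite chernoff_dualE; apply: ler_sum => m _.
apply: ler_wpM2l; first exact: ltW.
rewrite ler_pdivlMr ?var_min_gt0 //.
have := var_min_gt0 k l m; have := var_min_le_mix k l m t01.
set e := A k m - A l m; set v := u 0 m; set a := var_min A k l m.
set o := var_mix A k l t m => oa a0.
have := sqr_ge0 (a * v - e); have : 0 <= (o - a) * v ^+ 2 * a.
  by apply: mulr_ge0; [apply: mulr_ge0; rewrite ?subr_ge0 ?sqr_ge0 | exact: ltW].
nra.
Qed.

Lemma chernoff_dual_gap_gt0 k l t : 0 <= t <= 1 -> row k A != row l A ->
  exists2 u, (u <= A)%MS & 0 < chernoff_dual A k l t u.
Proof.
move=> t01 rkl; have [m0 gap_m0] : exists m, A k m != A l m.
  apply/existsP; apply: contraR rkl => /existsPn same.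
  by apply/eqP/rowP => m; rewrite !mxE; apply/eqP; have := same m; rewrite negbK.
set E := \sum_m pi m * (A k m - A l m) ^+ 2.
set F := \sum_m pi m * var_mix A k l t m * (A k m - A l m) ^+ 2.
have gap2_gt0 : 0 < (A k m0 - A l m0) ^+ 2 by rewrite exprn_even_gt0 // subr_eq0.
have E_gt0 : 0 < E.
  apply: (psumr_gt0 (i := m0)) => [m|]; last exact: mulr_gt0.
  exact: mulr_ge0 (ltW (pi_gt0 m)) (sqr_ge0 _).
have F_gt0 : 0 < F.
  have w_gt0 m : 0 < pi m * var_mix A k l t m by rewrite mulr_gt0 ?var_mix_gt0.
  apply: (psumr_gt0 (i := m0)) => [m|]; last exact: mulr_gt0.
  exact: mulr_ge0 (ltW (w_gt0 m)) (sqr_ge0 _).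
exists ((E / F) *: (row k A - row l A)).
  by apply: scalemx_sub; rewrite !rowE -mulmxBl submxMl.
have uE m : ((E / F) *: (row k A - row l A)) 0 m = E / F * (A k m - A l m).
  by rewrite !mxE.
rewrite /chernoff_dual.
under eq_bigr do rewrite uE.
under [X in _ - X]eq_bigr do rewrite uE.
have -> : \sum_m pi m * (A k m - A l m) * (E / F * (A k m - A l m)) = E / F * E.
  by rewrite mulr_sumr; apply: eq_bigr => m _; ring.
have -> : \sum_m pi m * var_mix A k l t m * (E / F * (A k m - A l m)) ^+ 2 =
    (E / F) ^+ 2 * F.
  by rewrite mulr_sumr; apply: eq_bigr => m _; ring.
have -> : 2 * (E / F * E) - (E / F) ^+ 2 * F = E ^+ 2 / F by field; rewrite gt_eqF.
by rewrite divr_gt0 ?exprn_gt0.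
Qed.

End Entries01.

Lemma chernoff_dual_scaleE B c k l t u : chernoff_dual (c *: B) k l t u =
  c * \sum_m pi m * (2 * (B k m - B l m) * u 0 m
                     - (t * B k m + (1 - t) * B l m) * u 0 m ^+ 2)
  + c ^+ 2 * \sum_m pi m * (t * B k m ^+ 2 + (1 - t) * B l m ^+ 2) * u 0 m ^+ 2.
Proof.
rewrite chernoff_dualE !mulr_sumr -big_split; apply: eq_bigr => m _.
by rewrite /= /var_mix !mxE; ring.
Qed.

Lemma chernoff_dual_scale B c1 c2 k l t u : 0 < c1 -> c1 < c2 -> 0 <= t <= 1 ->
  c2 / c1 * chernoff_dual (c1 *: B) k l t u <= chernoff_dual (c2 *: B) k l t u.
Proof.
move=> c1_gt0 c12 /andP[t0 t1]; rewrite !chernoff_dual_scaleE.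
set L := \sum_m _; set Q := \sum_m _.
have Q_ge0 : 0 <= Q.
  apply: sumr_ge0 => m _; apply: mulr_ge0 (sqr_ge0 _).
  apply: mulr_ge0 (ltW (pi_gt0 m)) _.
  by apply: addr_ge0; apply: mulr_ge0; rewrite ?subr_ge0 ?sqr_ge0.
have -> : c2 / c1 * (c1 * L + c1 ^+ 2 * Q) = c2 * L + c2 * c1 * Q.
  by field; rewrite gt_eqF.
rewrite lerD2l expr2 -!mulrA ler_pM2l ?(lt_trans c1_gt0) //.
by rewrite ler_wpM2r // ltW.
Qed.

End ChernoffDual.

Section SpectralDecomposition.
Variables (R : realType) (K : nat) (A : 'M[R]_K) (D : sdecomp A).
Local Notation d := (dp D + dm D)%N.

Definition sqrt_eig : 'rV[R]_d := \row_i Num.sqrt `|ds D 0 i|.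

Lemma ds_neq0 i : ds D 0 i != 0.
Proof.
by case: (ltnP i (dp D)) => [/ds_pos/gt_eqF|/ds_neg/lt_eqF] ->.
Qed.

Lemma sqrt_eig_gt0 i : 0 < sqrt_eig 0 i.
Proof. by rewrite mxE sqrtr_gt0 normr_gt0 ds_neq0. Qed.

Lemma diag_sqrt_eig_Ipm :
  diag_mx sqrt_eig *m Ipm D *m diag_mx sqrt_eig = diag_mx (ds D).
Proof.
rewrite /Ipm !mulmx_diag; congr diag_mx; apply/rowP => i; rewrite !mxE.
rewrite mulrAC -expr2 sqr_sqrtr ?normr_ge0 //.
case: ltnP => [/ds_pos/ltW/ger0_norm|/ds_neg/ltr0_norm] ->.
  by rewrite mulr1.
by rewrite mulrN1 opprK.
Qed.

Lemma Ipm_invol : Ipm D *m Ipm D = 1%:M.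
Proof.
rewrite /Ipm mulmx_diag -diag_const_mx; congr diag_mx; apply/rowP => i.
by rewrite !mxE; case: ifP; rewrite ?mulr1 ?mulrN1 ?opprK.
Qed.

Lemma nu_Ipm_nuT : nu D *m Ipm D *m (nu D)^T = A.
Proof.
apply: etrans _ (esym (dB D)).
by rewrite /nu -/sqrt_eig trmx_mul tr_diag_mx -diag_sqrt_eig_Ipm !mulmxA.
Qed.

Lemma nuk_Ipm_nukT k l : (nuk D k *m Ipm D *m (nuk D l)^T) 0 0 = A k l.
Proof. by rewrite /nuk -row_mul mulmx_trmx_row -row_mul nu_Ipm_nuT mxE. Qed.

Lemma sub_nuT : (A <= (nu D)^T)%MS.
Proof. by apply/submxP; exists (nu D *m Ipm D); rewrite nu_Ipm_nuT. Qed.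

(* [nu^T = |S|^(1/2) U^T = (|S|^(1/2) S^-1 U^T) (U S U^T)] since [U^T U = 1]. *)
Lemma nuT_sub : ((nu D)^T <= A)%MS.
Proof.
set W := diag_mx (\row_i (sqrt_eig 0 i / ds D 0 i)) *m (dU D)^T; apply/submxP; exists W.
transitivity (W *m (dU D *m diag_mx (ds D) *m (dU D)^T)); last first.
  exact: (congr1 (mulmx W) (esym (dB D))).
rewrite /W !mulmxA -[_ *m (dU D)^T *m dU D]mulmxA dU_orth mulmx1.
rewrite mulmx_diag /nu -/sqrt_eig trmx_mul tr_diag_mx.
by congr (diag_mx _ *m _); apply/rowP => i; rewrite !mxE divfK ?ds_neq0.
Qed.

Lemma mulmx_nuT_eq0 (z : 'rV[R]_d) : z *m (nu D)^T = 0 -> z = 0.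
Proof.
rewrite /nu -/sqrt_eig trmx_mul tr_diag_mx mulmxA => zDU0.
have : z *m diag_mx sqrt_eig = 0.
  by rewrite -[LHS]mulmx1 -(dU_orth D) mulmxA zDU0 mul0mx.
move=> /rowP zD0; apply/rowP => i; have := zD0 i.
rewrite mul_mx_diag mxE [RHS]mxE => /eqP.
by rewrite mulf_eq0 (gt_eqF (sqrt_eig_gt0 i)) orbF mxE => /eqP.
Qed.

Definition gram (c : 'I_K -> R) : 'M[R]_d := \sum_l c l *: ((nuk D l)^T *m nuk D l).

Lemma gram_bilinear c (x z : 'rV[R]_d) :
  (x *m gram c *m z^T) 0 0 = \sum_l c l * ((x *m (nu D)^T) 0 l * (z *m (nu D)^T) 0 l).
Proof.
rewrite /gram mulmx_sumr mulmx_suml summxE; apply: eq_bigr => l _.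
rewrite -scalemxAr -scalemxAl mxE mulmxA -[_ *m z^T]mulmxA mulmx11E.
by rewrite -[nuk D l *m z^T]trmx11 trmx_mul trmxK /nuk !mulmx_trmx_row.
Qed.

Lemma gram_quad c (z : 'rV[R]_d) :
  (z *m gram c *m z^T) 0 0 = \sum_l c l * (z *m (nu D)^T) 0 l ^+ 2.
Proof. by rewrite gram_bilinear; under eq_bigr do rewrite -expr2. Qed.

Lemma gram_sym c : (gram c)^T = gram c.
Proof.
by rewrite linear_sum; apply: eq_bigr => l _; rewrite linearZ /= trmx_mul trmxK.
Qed.

Lemma gram_comb c1 c2 (a b : R) :
  a *: gram c1 + b *: gram c2 = gram (fun l => a * c1 l + b * c2 l).
Proof.
rewrite !scaler_sumr -big_split; apply: eq_bigr => l _.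
by rewrite /= !scalerA scalerDl.
Qed.

(* A positive weighting makes the Gram form definite because [nu^T] is injective. *)
Lemma gram_unit c : (forall l, 0 < c l) -> gram c \in unitmx.
Proof.
move=> c_gt0; rewrite unitmxE unitfE; apply/negP => /det0P[z z_neq0 zG0].
have : (z *m gram c *m z^T) 0 0 = 0 by rewrite zG0 mul0mx mxE.
rewrite gram_quad => /eqP; rewrite psumr_eq0 => [/allP z_ker|l _]; last first.
  exact: mulr_ge0 (ltW (c_gt0 l)) (sqr_ge0 _).
apply/(negP z_neq0)/eqP/mulmx_nuT_eq0/rowP => l; rewrite [RHS]mxE.
by have := z_ker l (mem_index_enum _); rewrite /= mulf_eq0 gt_eqF //= sqrf_eq0 => /eqP.
Qed.

Lemma Ipm_sym : (Ipm D)^T = Ipm D.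
Proof. exact: tr_diag_mx. Qed.

Lemma mulmx_Ipm_Ipm m (X : 'M[R]_(m, d)) : X *m Ipm D *m Ipm D = X.
Proof. by rewrite -mulmxA Ipm_invol mulmx1. Qed.

Variable pi : 'I_K -> R.
Hypothesis pi_gt0 : forall m, 0 < pi m.
Hypothesis A01 : forall i j, 0 < A i j < 1.

Let mix_weight k l t m := pi m * var_mix A k l t m.
Let gap k l := (nuk D k - nuk D l) *m Ipm D *m gram pi.

Let mix_weight_gt0 k l t : 0 <= t <= 1 -> forall m, 0 < mix_weight k l t m.
Proof. by move=> t01 m; rewrite mulr_gt0 ?var_mix_gt0. Qed.

Lemma Sigma_t_gram k l t : Sigma_t D pi k l t =
  Ipm D *m invmx (gram pi) *m gram (mix_weight k l t) *m invmx (gram pi) *m Ipm D.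
Proof.
have -> : gram (mix_weight k l t) =
    t *: gram (fun m => pi m * A k m * (1 - A k m))
    + (1 - t) *: gram (fun m => pi m * A l m * (1 - A l m)).
  by rewrite gram_comb; apply: eq_bigr => m _; rewrite /mix_weight /var_mix; congr (_ *: _); ring.
by rewrite mulmxDr !mulmxDl -!scalemxAr -!scalemxAl.
Qed.

Lemma invmx_Sigma_t k l t : 0 <= t <= 1 -> invmx (Sigma_t D pi k l t) =
  Ipm D *m gram pi *m invmx (gram (mix_weight k l t)) *m gram pi *m Ipm D.
Proof.
move=> t01; have G_unit := gram_unit pi_gt0.
have M_unit := gram_unit (mix_weight_gt0 k l t01).
apply: mulmx1_invmx; rewrite Sigma_t_gram !mulmxA mulmx_Ipm_Ipm.
by rewrite (mulmxKV G_unit) (mulmxK M_unit) (mulmxKV G_unit) Ipm_invol.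
Qed.

Lemma chernoff_obj_gram k l t : 0 <= t <= 1 -> chernoff_obj D pi k l t =
  t * (1 - t) * (gap k l *m invmx (gram (mix_weight k l t)) *m (gap k l)^T) 0 0.
Proof.
move=> t01; rewrite /chernoff_obj invmx_Sigma_t // /gap !trmx_mul gram_sym Ipm_sym.
by rewrite !mulmxA.
Qed.

Lemma chernoff_dual_gram k l t (z : 'rV[R]_d) :
  2 * (gap k l *m z^T) 0 0 - (z *m gram (mix_weight k l t) *m z^T) 0 0
  = chernoff_dual pi A k l t (z *m (nu D)^T).
Proof.
rewrite gram_quad gram_bilinear /chernoff_dual; congr (2 * _ - _).
apply: eq_bigr => m _; rewrite -mulmx_trmx_row -/(nuk D m) mulmxBl mulmxBl mxBE.
by rewrite !nuk_Ipm_nukT mulrA.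
Qed.

Lemma chernoff_obj_ge_dual k l t u : 0 <= t <= 1 -> (u <= A)%MS ->
  t * (1 - t) * chernoff_dual pi A k l t u <= chernoff_obj D pi k l t.
Proof.
move=> t01 /submx_trans /(_ sub_nuT) /submxP[z ->].
have /andP[t0 t1] := t01.
rewrite chernoff_obj_gram // -chernoff_dual_gram ler_wpM2l ?mulr_ge0 ?subr_ge0 //.
apply: quad_inv_ge; rewrite ?gram_sym ?(gram_unit (mix_weight_gt0 k l t01)) // => y.
by rewrite gram_quad sumr_ge0 // => m _; rewrite mulr_ge0 ?sqr_ge0 ?ltW ?mix_weight_gt0.
Qed.

Lemma chernoff_obj_dual_attained k l t : 0 <= t <= 1 -> exists2 u, (u <= A)%MS &
  chernoff_obj D pi k l t = t * (1 - t) * chernoff_dual pi A k l t u.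
Proof.
move=> t01; set M := gram (mix_weight k l t).
exists (gap k l *m invmx M *m (nu D)^T); first exact: submx_trans (submxMl _ _) nuT_sub.
rewrite chernoff_obj_gram // -chernoff_dual_gram quad_inv_attained ?gram_sym //.
exact: gram_unit (mix_weight_gt0 k l t01).
Qed.

End SpectralDecomposition.

Section ChernoffInformation.
Variables (R : realType) (K : nat) (pi : 'I_K -> R).
Hypothesis pi_gt0 : forall m, 0 < pi m.
Hypothesis K_ge2 : (2 <= K)%N.
Implicit Types (A B : 'M[R]_K) (t : R).

Let open_unit_closed t : 0 < t < 1 -> 0 <= t <= 1.
Proof. by case/andP=> t0 t1; rewrite !ltW. Qed.

Section OneMatrix.
Variables (A : 'M[R]_K) (D : sdecomp A).
Hypothesis A01 : forall i j, 0 < A i j < 1.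

Lemma chernoff_obj_ge0 k l t : 0 <= t <= 1 -> 0 <= chernoff_obj D pi k l t.
Proof.
move=> t01; apply: le_trans (chernoff_obj_ge_dual D pi_gt0 A01 k l t01 (sub0mx _ _)).
by rewrite chernoff_dual0 mulr0.
Qed.

Lemma chernoff_obj_le_bound k l t : 0 < t < 1 ->
  chernoff_obj D pi k l t <= chernoff_dual_bound pi A k l.
Proof.
move=> t01; have t_closed := open_unit_closed t01; have /andP[t0 t1] := t01.
have := chernoff_obj_ge0 k l t_closed.
have [u _ ->] := chernoff_obj_dual_attained D pi_gt0 A01 k l t_closed.
have := chernoff_dual_le_bound pi_gt0 A01 k l u t_closed.
set p := chernoff_dual _ _ _ _ _ _; set b := chernoff_dual_bound _ _ _ _.
have s0 : 0 < t * (1 - t) by rewrite mulr_gt0 ?subr_gt0.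
have s1 : t * (1 - t) <= 1 by nra.
move: s0 s1; set s := t * (1 - t); nra.
Qed.

Lemma chernoff_obj_le_C k l t : 0 < t < 1 -> chernoff_obj D pi k l t <= chernoff_C D pi k l.
Proof.
move=> t01; apply: ub_le_sup; last by exists t.
exists (chernoff_dual_bound pi A k l) => _ [s s01 <-].
exact: chernoff_obj_le_bound.
Qed.

Lemma chernoff_C_gt0 k l : row k A != row l A -> 0 < chernoff_C D pi k l.
Proof.
move=> rkl; have half01 : 0 < (2^-1 : R) < 1 by apply/andP; split; lra.
have [u u_sub dual_gt0] := chernoff_dual_gap_gt0 pi_gt0 A01 (open_unit_closed half01) rkl.
apply: lt_le_trans (chernoff_obj_le_C k l half01).
apply: lt_le_trans (chernoff_obj_ge_dual D pi_gt0 A01 k l (open_unit_closed half01) u_sub).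
by rewrite !mulr_gt0 //; lra.
Qed.

Lemma le_rho x : (forall k l, k != l -> x <= chernoff_C D pi k l) -> x <= rho D pi.
Proof.
move=> x_le; apply: lb_le_inf => [|_ [k [l [kl ->]]]]; last exact: x_le.
have K_gt0 : (0 < K)%N by apply: leq_trans K_ge2.
by exists (chernoff_C D pi (Ordinal K_gt0) (Ordinal K_ge2)), (Ordinal K_gt0), (Ordinal K_ge2).
Qed.

Hypothesis A_rows : forall k l, k != l -> row k A != row l A.

Lemma rho_gt0 : 0 < rho D pi.
Proof.
set m := \big[Order.min/1]_(p : 'I_K * 'I_K | p.1 != p.2) chernoff_C D pi p.1 p.2.
apply: (@lt_le_trans _ _ m).
  apply: (big_ind (fun x => 0 < x)) => // [x y x0 y0|[k l] /= kl].
    by rewrite lt_min x0 y0.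
  exact: chernoff_C_gt0 (A_rows kl).
apply: le_rho => k l kl.
exact: (bigmin_le_cond 1 (fun p : 'I_K * 'I_K => chernoff_C D pi p.1 p.2) (j := (k, l)) kl).
Qed.

Lemma rho_le_C k l : k != l -> rho D pi <= chernoff_C D pi k l.
Proof.
move=> kl; apply: ge_inf; last by exists k, l.
by exists 0 => _ [i [j [ij ->]]]; apply/ltW/chernoff_C_gt0/A_rows.
Qed.

End OneMatrix.

Section Scaling.
Variables (B A1 A2 : 'M[R]_K) (D1 : sdecomp A1) (D2 : sdecomp A2) (c1 c2 : R).
Hypotheses (c1_gt0 : 0 < c1) (c12 : c1 < c2).
Hypotheses (A1E : A1 = c1 *: B) (A2E : A2 = c2 *: B).
Hypotheses (A1_01 : forall i j, 0 < A1 i j < 1) (A2_01 : forall i j, 0 < A2 i j < 1).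

(* [A1] and [A2] have the same row space, so a maximiser for [A1] competes for [A2]. *)
Lemma chernoff_obj_scale k l t : 0 <= t <= 1 ->
  c2 / c1 * chernoff_obj D1 pi k l t <= chernoff_obj D2 pi k l t.
Proof.
move=> t01; have /andP[t0 t1] := t01.
have [u u_sub ->] := chernoff_obj_dual_attained D1 pi_gt0 A1_01 k l t01.
have u_sub2 : (u <= A2)%MS.
  move: u_sub; rewrite A1E A2E !eqmx_scale // gt_eqF //.
  exact: lt_trans c12.
apply: le_trans (chernoff_obj_ge_dual D2 pi_gt0 A2_01 k l t01 u_sub2).
rewrite mulrCA ler_wpM2l ?mulr_ge0 ?subr_ge0 // A1E A2E.
exact: chernoff_dual_scale.
Qed.

Lemma chernoff_C_scale k l : c2 / c1 * chernoff_C D1 pi k l <= chernoff_C D2 pi k l.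
Proof.
have r_gt0 : 0 < c2 / c1 by rewrite divr_gt0 // (lt_trans c1_gt0).
rewrite mulrC -ler_pdivlMr //; apply: ge_sup.
  by exists (chernoff_obj D1 pi k l 2^-1), 2^-1 => //; apply/andP; split; lra.
move=> _ [t t01 <-]; rewrite ler_pdivlMr // mulrC.
apply: le_trans (chernoff_obj_scale k l (open_unit_closed t01)) _.
exact: chernoff_obj_le_C.
Qed.

Hypothesis A1_rows : forall k l, k != l -> row k A1 != row l A1.

(* [rho D2 >= (c2 / c1) rho D1 > rho D1], the last step because [rho D1 > 0]. *)
Lemma rho_scale_lt : rho D1 pi < rho D2 pi.
Proof.
have r_gt1 : 1 < c2 / c1 by rewrite ltr_pdivlMr // mul1r.
have rho1_gt0 := rho_gt0 D1 A1_01 A1_rows.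
apply: (@lt_le_trans _ _ (c2 / c1 * rho D1 pi)); first by rewrite ltr_pMl.
apply: le_rho => k l kl; apply: le_trans (chernoff_C_scale k l).
by rewrite ler_wpM2l ?(rho_le_C D1 A1_01 A1_rows kl) // ltW // (lt_trans _ r_gt1).
Qed.

End Scaling.

End ChernoffInformation.

Lemma scale_entries01 (R : realFieldType) K (B : 'M[R]_K) (c : R) :
  (forall i j, 0 < B i j < 1) -> 0 < c <= 1 -> forall i j, 0 < (c *: B) i j < 1.
Proof.
move=> B01 /andP[c0 c1] i j; have /andP[b0 b1] := B01 i j.
by rewrite mxE mulr_gt0 //=; nra.
Qed.

Lemma scale_rows_neq (R : fieldType) K (B : 'M[R]_K) (c : R) : c != 0 ->
  (forall k l, k != l -> row k B != row l B) ->
  forall k l, k != l -> row k (c *: B) != row l (c *: B).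
Proof. by move=> c0 B_rows k l kl; rewrite !linearZ /= (inj_eq (scalerI c0)) B_rows. Qed.

Theorem corollary1 (R : realType) (K : nat) (hK : (2 <= K)%N)
  (pi : 'I_K -> R)
  (hpi : forall k, 0 < pi k < 1) (hpisum : \sum_(k < K) pi k = 1)
  (B : 'M[R]_K)
  (hB : forall k l, 0 < B k l < 1) (hBsym : B^T = B)
  (hBrows : forall k l : 'I_K, k != l -> row k B != row l B)
  (p0 p1 : R) (hp0 : 0 < p0 < 1) (hp1 : 0 < p1 < 1 - p0)
  (D : sdecomp B) (D1 : sdecomp ((p0 + p1) *: B)) (D0 : sdecomp (p0 *: B)) :
  rho D1 pi < rho D pi /\ rho D0 pi < rho D1 pi.
Proof.
have pi_gt0 k : 0 < pi k by case/andP: (hpi k).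
have /andP[p0_gt0 p0_lt1] := hp0; have /andP[p1_gt0 p1_lt] := hp1.
have p01_gt0 : 0 < p0 + p1 by rewrite addr_gt0.
have B1_01 : forall i j, 0 < ((p0 + p1) *: B) i j < 1.
  by apply: scale_entries01 => //; rewrite p01_gt0 /=; lra.
split.
- apply: (rho_scale_lt pi_gt0 hK (B := B) D1 D p01_gt0 _ erefl (esym (scale1r B))) => //.
  + lra.
  + by apply: scale_rows_neq; rewrite ?gt_eqF.
- apply: (rho_scale_lt pi_gt0 hK (B := B) D0 D1 p0_gt0 _ erefl erefl) => //.
  + lra.
  + by apply: scale_entries01 => //; rewrite p0_gt0 ltW.
  + by apply: scale_rows_neq; rewrite ?gt_eqF.
Qed.
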